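(* Let $\sigma_X>0$, $R>0$, $R_c\ge0$, $P\ge0$, and write $a:=\sqrt{1-e^{-2R}}$, $b:=\sqrt{1-e^{-2(R+R_c)}}$, $e:=e^{-2(R+R_c)}$. Define $$\varsigma(R,R_c):=\frac{\sigma_X\big(\sqrt{b^2+4a^2e}-b\big)}{2ae},\qquad \varsigma'(R,R_c):=\frac{\sqrt{1+4\beta_1\beta_2'}-1}{2\beta_1},$$ with $\beta_1=\frac{ae}{\sigma_X b}$ and $\beta_2'=\sigma_X a\big(1+\frac{e}{b}\big)$, and let $\sigma(R,R_c,P):=\frac{\sqrt{1+4\beta_1\beta_2}-1}{2\beta_1}$ with $\beta_2=\sigma_X\sqrt{(1-e^{-2R})(1-e^{-2(R+R_c+P)})}+\frac{\sigma_X a e}{b}$. Then $$\varsigma(R,R_c)\le\sigma(R,R_c,P)\le\varsigma'(R,R_c)<\sigma_X.$$ Moreover, if $\underline D(R,R_c,P|\mathcal N(\mu_X,\sigma_X^2))=\sigma_X^2+\sigma^2(P)-2\sigma_X\sigma(P)\xi(R,R_c)$, then $\sigma(P)\ge\varsigma(R,R_c)$.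
   Context: All logarithms are natural. $\xi(R,R_c):=\sqrt{(1-e^{-2R})(1-e^{-2(R+R_c)})}$. For $\sigma\in(0,\sigma_X]$, $\psi(\sigma):=\log\frac{\sigma_X}{\sigma}+\frac{\sigma^2-\sigma_X^2}{2\sigma_X^2}$ (strictly decreasing, $\to\infty$ as $\sigma\to0$, $\psi(\sigma_X)=0$), and $\sigma(P)$ is the unique $\sigma\in(0,\sigma_X]$ with $\psi(\sigma)=P$. $\underline D(R,R_c,P|\mathcal N(\mu_X,\sigma_X^2)):=\min_{\sigma_{\hat X}\in[\sigma(P),\sigma_X]}\big(\sigma_X^2+\sigma_{\hat X}^2-2\sigma_X\sigma_{\hat X}\sqrt{(1-e^{-2R})(1-e^{-2(R+R_c+P-\psi(\sigma_{\hat X}))})}\big)$. *)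

From Stdlib Require Import Reals Lra.
From Coquelicot Require Import Coquelicot.
Open Scope R_scope.

Definition xi (R0 Rc : R) : R :=
  sqrt ((1 - exp (-2 * R0)) * (1 - exp (-2 * (R0 + Rc)))).

Definition psi (sX s : R) : R :=
  ln (sX / s) + (s ^ 2 - sX ^ 2) / (2 * sX ^ 2).

(* sigma(P): the unique s in (0, sX] with psi(s) = P *)
Definition is_sigmaP (sX P s : R) : Prop :=
  0 < s <= sX /\ psi sX s = P.

Definition Dobj (sX R0 Rc P t : R) : R :=
  sX ^ 2 + t ^ 2 - 2 * sX * t *
    sqrt ((1 - exp (-2 * R0)) * (1 - exp (-2 * (R0 + Rc + P - psi sX t)))).

(* underline D(R,Rc,P | N(muX, sX^2)) = min over t in [sigma(P), sX] of Dobj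
   (the minimum of a continuous function on a compact interval, i.e. its
   infimum, which is attained); sP is sigma(P). It does not depend on muX. *)
Definition Dlow (sX R0 Rc P sP : R) : R :=
  real (Glb_Rbar (fun y => exists t, sP <= t <= sX /\ y = Dobj sX R0 Rc P t)).

Definition av (R0 : R) : R := sqrt (1 - exp (-2 * R0)).
Definition bv (R0 Rc : R) : R := sqrt (1 - exp (-2 * (R0 + Rc))).
Definition ev (R0 Rc : R) : R := exp (-2 * (R0 + Rc)).

Definition beta1 (sX R0 Rc : R) : R := av R0 * ev R0 Rc / (sX * bv R0 Rc).
Definition beta2' (sX R0 Rc : R) : R := sX * av R0 * (1 + ev R0 Rc / bv R0 Rc).
Definition beta2 (sX R0 Rc P : R) : R :=
  sX * sqrt ((1 - exp (-2 * R0)) * (1 - exp (-2 * (R0 + Rc + P))))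
  + sX * av R0 * ev R0 Rc / bv R0 Rc.

Definition varsigma (sX R0 Rc : R) : R :=
  sX * (sqrt (bv R0 Rc ^ 2 + 4 * av R0 ^ 2 * ev R0 Rc) - bv R0 Rc)
  / (2 * av R0 * ev R0 Rc).

Definition varsigma' (sX R0 Rc : R) : R :=
  (sqrt (1 + 4 * beta1 sX R0 Rc * beta2' sX R0 Rc) - 1) / (2 * beta1 sX R0 Rc).

Definition sigmaRRcP (sX R0 Rc P : R) : R :=
  (sqrt (1 + 4 * beta1 sX R0 Rc * beta2 sX R0 Rc P) - 1) / (2 * beta1 sX R0 Rc).

From Stdlib Require Import Reals Lra Psatz.
From Coquelicot Require Import Coquelicot.
Open Scope R_scope.

(* varsigma, sigma(R,Rc,P) and varsigma' are the nonnegative roots of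
   beta1 x^2 + x = beta for beta = sX a / b, beta2 and beta2' respectively
   (for varsigma after clearing the denominator with b^2 + e = 1).  Since
   x |-> beta1 x^2 + x is increasing on [0, oo), the chain of inequalities is
   the chain sX a / b <= beta2 <= beta2' < beta1 sX^2 + sX.
   For the second claim: at the left endpoint sigma(P) of [sigma(P), sX] the
   exponent R + Rc + P - psi(t) equals R + Rc, and the derivative of the
   objective there is 2 (beta1 sigma(P)^2 + sigma(P) - sX a / b).  If the
   minimum is attained at sigma(P) < sX this derivative is nonnegative, which
   is exactly sigma(P) >= varsigma. *)

Definition pos_root (c be : R) : R := (sqrt (1 + 4 * c * be) - 1) / (2 * c).

Lemma pos_root_spec (c be : R) : 0 < c -> 0 <= be ->
  0 <= pos_root c be /\ c * pos_root c be ^ 2 + pos_root c be = be.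
Proof.
intros Hc Hbe; unfold pos_root.
assert (Hd : 0 <= 1 + 4 * c * be) by nra.
pose proof (sqrt_sqrt _ Hd) as Hs; pose proof (sqrt_pos (1 + 4 * c * be)).
set (s := sqrt (1 + 4 * c * be)) in *.
split.
- apply Rmult_le_pos; [nra | left; apply Rinv_0_lt_compat; lra].
- field_simplify; [|lra]. replace (s ^ 2) with (s * s) by ring. rewrite Hs. field. lra.
Qed.

Lemma quad_le_inv (c x y : R) : 0 < c -> 0 <= x -> 0 <= y ->
  c * x ^ 2 + x <= c * y ^ 2 + y -> x <= y.
Proof.
intros Hc Hx Hy H; apply Rnot_lt_le; intro Hyx.
assert (c * (y * y) <= c * (x * x)) by (apply Rmult_le_compat_l; nra).
lra.
Qed.

Lemma quad_lt_inv (c x y : R) : 0 < c -> 0 <= x -> 0 <= y ->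
  c * x ^ 2 + x < c * y ^ 2 + y -> x < y.
Proof.
intros Hc Hx Hy H; apply Rnot_le_lt; intro Hyx.
assert (c * (y * y) <= c * (x * x)) by (apply Rmult_le_compat_l; nra).
lra.
Qed.

Lemma is_derive_ge0_at_left_min (f : R -> R) (x y l : R) :
  is_derive f x l -> x < y -> (forall t, x <= t <= y -> f x <= f t) -> 0 <= l.
Proof.
intros Hd Hxy Hmin. apply Rnot_lt_le; intro Hl.
apply is_derive_Reals in Hd.
destruct (Hd (- l) ltac:(lra)) as [[d Hd0] Hdel]; simpl in Hdel.
set (h := Rmin (d / 2) (y - x)).
assert (Hh : 0 < h) by (apply Rmin_pos; lra).
assert (Hhd : h <= d / 2) by apply Rmin_l.
assert (Hhy : h <= y - x) by apply Rmin_r.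
specialize (Hdel h ltac:(lra) ltac:(rewrite Rabs_right; lra)).
apply Rabs_def2 in Hdel.
assert (Hq : 0 <= (f (x + h) - f x) / h).
{ apply Rmult_le_pos; [| left; apply Rinv_0_lt_compat; lra].
  pose proof (Hmin (x + h) ltac:(lra)); lra. }
lra.
Qed.

Lemma exp_m2_lt_1 (x : R) : 0 < x -> exp (-2 * x) < 1.
Proof. intro Hx; rewrite <- exp_0; apply exp_increasing; lra. Qed.

Section Rates.
Variables sX R0 Rc : R.
Hypothesis sX_gt0 : 0 < sX.
Hypothesis R0_gt0 : 0 < R0.
Hypothesis Rc_ge0 : 0 <= Rc.

Let expR0_lt_1 : exp (-2 * R0) < 1 := exp_m2_lt_1 R0 R0_gt0.

Lemma ev_lt_1 : ev R0 Rc < 1.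
Proof. apply exp_m2_lt_1; lra. Qed.

Lemma av_sqr : av R0 ^ 2 = 1 - exp (-2 * R0).
Proof. unfold av; rewrite <- Rsqr_pow2; apply Rsqr_sqrt; lra. Qed.

Lemma bv_sqr : bv R0 Rc ^ 2 = 1 - ev R0 Rc.
Proof. unfold bv; rewrite <- Rsqr_pow2; apply Rsqr_sqrt; pose proof ev_lt_1; unfold ev in *; lra. Qed.

Lemma av_gt0 : 0 < av R0.
Proof. unfold av; apply sqrt_lt_R0; lra. Qed.

Lemma av_lt_1 : av R0 < 1.
Proof. pose proof av_sqr; pose proof av_gt0; pose proof (exp_pos (-2 * R0)); nra. Qed.

Lemma bv_gt0 : 0 < bv R0 Rc.
Proof. unfold bv; apply sqrt_lt_R0; pose proof ev_lt_1; unfold ev in *; lra. Qed.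

Lemma beta1_gt0 : 0 < beta1 sX R0 Rc.
Proof.
unfold beta1; pose proof av_gt0; pose proof bv_gt0; pose proof (exp_pos (-2 * (R0 + Rc))).
unfold ev; apply Rdiv_lt_0_compat; apply Rmult_lt_0_compat; lra.
Qed.

Lemma beta2_ge (P : R) : 0 <= P -> sX * av R0 / bv R0 Rc <= beta2 sX R0 Rc P.
Proof.
intro HP; pose proof bv_gt0; pose proof bv_sqr; pose proof av_gt0.
assert (Hab : av R0 * bv R0 Rc
              <= sqrt ((1 - exp (-2 * R0)) * (1 - exp (-2 * (R0 + Rc + P))))).
{ unfold av, bv; rewrite <- sqrt_mult by (pose proof ev_lt_1; unfold ev in *; lra).
  apply sqrt_le_1_alt, Rmult_le_compat_l; [lra|].
  enough (exp (-2 * (R0 + Rc + P)) <= exp (-2 * (R0 + Rc))) by lra.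
  destruct HP as [HP | <-]; [left; apply exp_increasing; lra | right; f_equal; ring]. }
unfold beta2; replace (sX * av R0 / bv R0 Rc)
  with (sX * (av R0 * bv R0 Rc) + sX * av R0 * ev R0 Rc / bv R0 Rc)
  by (replace (ev R0 Rc) with (1 - bv R0 Rc ^ 2) by lra; field; lra).
apply Rplus_le_compat_r, Rmult_le_compat_l; lra.
Qed.

Lemma beta2_le (P : R) : beta2 sX R0 Rc P <= beta2' sX R0 Rc.
Proof.
pose proof bv_gt0.
assert (Hq : sqrt ((1 - exp (-2 * R0)) * (1 - exp (-2 * (R0 + Rc + P)))) <= av R0).
{ unfold av; apply sqrt_le_1_alt.
  pose proof (exp_pos (-2 * (R0 + Rc + P))); nra. }
unfold beta2, beta2'.
replace (sX * av R0 * (1 + ev R0 Rc / bv R0 Rc))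
  with (sX * av R0 + sX * av R0 * ev R0 Rc / bv R0 Rc) by (field; lra).
apply Rplus_le_compat_r, Rmult_le_compat_l; lra.
Qed.

Lemma beta2'_lt : beta2' sX R0 Rc < beta1 sX R0 Rc * sX ^ 2 + sX.
Proof.
pose proof bv_gt0; pose proof av_lt_1.
unfold beta2', beta1.
replace (av R0 * ev R0 Rc / (sX * bv R0 Rc) * sX ^ 2 + sX)
  with (sX * av R0 * (ev R0 Rc / bv R0 Rc) + sX) by (field; lra).
nra.
Qed.

Lemma varsigma_spec : 0 <= varsigma sX R0 Rc /\
  beta1 sX R0 Rc * varsigma sX R0 Rc ^ 2 + varsigma sX R0 Rc = sX * av R0 / bv R0 Rc.
Proof.
pose proof av_gt0; pose proof bv_gt0; pose proof bv_sqr.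
pose proof (exp_pos (-2 * (R0 + Rc))) as He; fold (ev R0 Rc) in He.
unfold varsigma, beta1.
set (a := av R0) in *; set (b := bv R0 Rc) in *; set (e := ev R0 Rc) in *.
assert (Hd : 0 <= b ^ 2 + 4 * a ^ 2 * e) by nra.
pose proof (sqrt_sqrt _ Hd) as Hs; pose proof (sqrt_pos (b ^ 2 + 4 * a ^ 2 * e)).
set (s := sqrt (b ^ 2 + 4 * a ^ 2 * e)) in *.
assert (b <= s) by nra.
split.
- apply Rmult_le_pos; [nra | left; apply Rinv_0_lt_compat; nra].
- transitivity (sX * (s * s - b * b) / (4 * a * e * b)); [field; lra|].
  rewrite Hs; replace e with (1 - b ^ 2) by lra; field; lra.
Qed.

Lemma Dobj_ge0 (P t : R) : 0 <= t -> 0 <= Dobj sX R0 Rc P t.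
Proof.
intro Ht; unfold Dobj.
set (z := exp (-2 * (R0 + Rc + P - psi sX t))).
assert (Hz : 0 < z) by apply exp_pos.
assert (Hw1 : sqrt ((1 - exp (-2 * R0)) * (1 - z)) <= 1).
{ apply Rle_trans with (sqrt 1); [apply sqrt_le_1_alt | now rewrite sqrt_1].
  pose proof expR0_lt_1; pose proof (exp_pos (-2 * R0)).
  assert (0 <= z * (1 - exp (-2 * R0))) by (apply Rmult_le_pos; lra); lra. }
pose proof (sqrt_pos ((1 - exp (-2 * R0)) * (1 - z))).
set (w := sqrt ((1 - exp (-2 * R0)) * (1 - z))) in *.
assert (0 <= sX * t * (1 - w)) by (apply Rmult_le_pos; nra).
pose proof (pow2_ge_0 (sX - t)); nra.
Qed.

Lemma Dlow_le_Dobj (P sP t : R) : 0 <= sP -> sP <= t <= sX ->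
  Dlow sX R0 Rc P sP <= Dobj sX R0 Rc P t.
Proof.
intros HsP Ht; unfold Dlow.
set (E := fun y => exists t, sP <= t <= sX /\ y = Dobj sX R0 Rc P t).
destruct (Glb_Rbar_correct E) as [Hlb Hglb].
assert (Et : E (Dobj sX R0 Rc P t)) by (exists t; split; [lra | reflexivity]).
pose proof (Hlb _ Et) as Hle.
assert (H0 : is_lb_Rbar E (Finite 0)).
{ intros y [s [Hs ->]]; apply Dobj_ge0; lra. }
pose proof (Hglb _ H0) as Hge.
destruct (Glb_Rbar E); simpl in *; tauto.
Qed.

Lemma Dobj_sigmaP (P sP : R) : psi sX sP = P ->
  Dobj sX R0 Rc P sP = sX ^ 2 + sP ^ 2 - 2 * sX * sP * xi R0 Rc.
Proof.
intro Hpsi; unfold Dobj, xi; rewrite Hpsi.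
now replace (R0 + Rc + P - P) with (R0 + Rc) by ring.
Qed.

Lemma is_derive_Dobj_sigmaP (P sP : R) : 0 < sP -> psi sX sP = P ->
  is_derive (Dobj sX R0 Rc P) sP
    (2 * (beta1 sX R0 Rc * sP ^ 2 + sP - sX * av R0 / bv R0 Rc)).
Proof.
intros HsP Hpsi.
pose proof av_gt0; pose proof bv_gt0; pose proof av_sqr; pose proof bv_sqr.
pose proof ev_lt_1; pose proof (exp_pos (-2 * (R0 + Rc))); fold (ev R0 Rc) in *.
assert (Hab : sqrt ((1 - exp (-2 * R0)) * (1 + - ev R0 Rc)) = av R0 * bv R0 Rc).
{ pose proof expR0_lt_1; unfold av, bv, ev in *.
  rewrite <- sqrt_mult by lra; f_equal; ring. }
unfold Dobj, psi; auto_derive;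
  match goal with |- context [exp (-2 * (R0 + Rc + P + - ?u))] =>
    replace u with P by (rewrite <- Hpsi; unfold psi, Rdiv; field; lra);
    replace (-2 * (R0 + Rc + P + - P)) with (-2 * (R0 + Rc)) by ring;
    fold (ev R0 Rc) end.
- repeat split; try lra.
  + apply Rdiv_lt_0_compat; lra.
  + rewrite <- av_sqr. nra.
- rewrite Hab. unfold beta1. rewrite <- av_sqr.
  replace (ev R0 Rc) with (1 - bv R0 Rc ^ 2) by lra. field. lra.
Qed.

Lemma sigmaRRcP_spec (P : R) : 0 <= P -> 0 <= sigmaRRcP sX R0 Rc P /\
  beta1 sX R0 Rc * sigmaRRcP sX R0 Rc P ^ 2 + sigmaRRcP sX R0 Rc P
  = beta2 sX R0 Rc P.
Proof.
intro HP; apply pos_root_spec; [exact beta1_gt0|].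
pose proof (beta2_ge P HP); pose proof av_gt0; pose proof bv_gt0.
enough (0 <= sX * av R0 / bv R0 Rc) by lra.
apply Rdiv_le_0_compat; nra.
Qed.

Lemma varsigma'_spec : 0 <= varsigma' sX R0 Rc /\
  beta1 sX R0 Rc * varsigma' sX R0 Rc ^ 2 + varsigma' sX R0 Rc = beta2' sX R0 Rc.
Proof.
apply pos_root_spec; [exact beta1_gt0|].
pose proof av_gt0; pose proof bv_gt0; pose proof (exp_pos (-2 * (R0 + Rc))).
unfold beta2', ev in *; apply Rmult_le_pos; [nra|].
enough (0 <= exp (-2 * (R0 + Rc)) / bv R0 Rc) by lra.
apply Rdiv_le_0_compat; lra.
Qed.
End Rates.

Theorem mainTheorem6 (sX R0 Rc P : R) :
  0 < sX -> 0 < R0 -> 0 <= Rc -> 0 <= P ->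
  (varsigma sX R0 Rc <= sigmaRRcP sX R0 Rc P /\
   sigmaRRcP sX R0 Rc P <= varsigma' sX R0 Rc /\
   varsigma' sX R0 Rc < sX) /\
  (forall sP : R, is_sigmaP sX P sP ->
     Dlow sX R0 Rc P sP = sX ^ 2 + sP ^ 2 - 2 * sX * sP * xi R0 Rc ->
     sP >= varsigma sX R0 Rc).
Proof.
intros HX HR HRc HP.
pose proof (beta1_gt0 sX R0 Rc HX HR HRc) as Hb1.
destruct (varsigma_spec sX R0 Rc HX HR HRc) as [Hv0 Hv].
destruct (sigmaRRcP_spec sX R0 Rc HX HR HRc P HP) as [Hs0 Hs].
destruct (varsigma'_spec sX R0 Rc HX HR HRc) as [Hs0' Hs'].
assert (Hv_s : varsigma sX R0 Rc <= sigmaRRcP sX R0 Rc P).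
{ apply (quad_le_inv _ _ _ Hb1 Hv0 Hs0); rewrite Hv, Hs; exact (beta2_ge _ _ _ HX HR HRc P HP). }
assert (Hs_s' : sigmaRRcP sX R0 Rc P <= varsigma' sX R0 Rc).
{ apply (quad_le_inv _ _ _ Hb1 Hs0 Hs0'); rewrite Hs, Hs'; exact (beta2_le _ _ _ HX HR HRc P). }
assert (Hs'_X : varsigma' sX R0 Rc < sX).
{ apply (quad_lt_inv _ _ _ Hb1 Hs0' (Rlt_le _ _ HX)); rewrite Hs'; exact (beta2'_lt _ _ _ HX HR HRc). }
split; [tauto|].
intros sP [[HsP0 HsPX] Hpsi] HD; apply Rle_ge.
destruct HsPX as [HsPX | ->]; [|lra].
assert (Hmin : forall t, sP <= t <= sX -> Dobj sX R0 Rc P sP <= Dobj sX R0 Rc P t).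
{ intros t Ht; rewrite (Dobj_sigmaP sX R0 Rc P sP Hpsi), <- HD.
  apply Dlow_le_Dobj; lra. }
pose proof (is_derive_ge0_at_left_min _ _ _ _
  (is_derive_Dobj_sigmaP sX R0 Rc HX HR HRc P sP HsP0 Hpsi) HsPX Hmin).
apply (quad_le_inv _ _ _ Hb1 Hv0 (Rlt_le _ _ HsP0)); lra.
Qed.
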